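(* Let $E$ be a JB$^*$-triple in which tripotents are norm-total, and let $T:E\to E$ be a bounded linear map. The following are equivalent: (a) $T$ is a triple derivation; (b) for each tripotent $e\in E$, the map $(P_0(e)+P_2(e))T|_{E_0(e)\oplus E_2(e)}:E_0(e)\oplus E_2(e)\to E_0(e)\oplus E_2(e)$ is a triple derivation of the JB$^*$-subtriple $E_0(e)\oplus E_2(e)$; (c) for each tripotent $e\in E$, the map $P_2(e)T|_{E_2(e)}:E_2(e)\to E_2(e)$ is a triple derivation of $E_2(e)$ and $P_0(e)T(e)=0$.
   Context: A JB$^*$-triple is a complex Banach space $E$ with a continuous triple product $\{\cdot,\cdot,\cdot\}$, bilinear and symmetric in the outer variables and conjugate-linear in the middle one, satisfying the Jordan identity $L(a,b)L(x,y)=L(x,y)L(a,b)+L(L(a,b)x,y)-L(x,L(b,a)y)$, such that $L(a,a)$ is hermitian with non-negative spectrum and $\|\{a,a,a\}\|=\|a\|^3$, where $L(a,b)x=\{a,b,x\}$. Elements $a,b$ are orthogonal ($a\perp b$) if $L(a,b)=0$. A tripotent is $e\in E$ with $\{e,e,e\}=e$; it induces the Peirce decomposition $E=E_2(e)\oplus E_1(e)\oplus E_0(e)$, $E_j(e)=\{x:\{e,e,x\}=\tfrac j2 x\}$, with Peirce projections $P_j(e)$ onto $E_j(e)$; each $E_j(e)$ and $E_0(e)\oplus E_2(e)$ are JB$^*$-subtriples. Tripotents are norm-total in $E$ if every element of $E$ is a norm limit of finite linear combinations of mutually orthogonal tripotents. A linear map $\delta$ is a triple derivation if $\delta\{a,b,c\}=\{\delta(a),b,c\}+\{a,\delta(b),c\}+\{a,b,\delta(c)\}$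 for all $a,b,c$. *)

From HB Require Import structures.
From mathcomp Require Import all_boot all_order all_algebra.
From mathcomp Require Import complex.
From mathcomp Require Import all_classical all_reals all_analysis.
Set Implicit Arguments. Unset Strict Implicit. Unset Printing Implicit Defensive.
Import Order.TTheory GRing.Theory Num.Theory ComplexField.
Import numFieldNormedType.Exports.
Local Open Scope ring_scope.

Section JB.
Variables (R : realType) (E : completeNormedModType R[i]).
Variable tp : E -> E -> E -> E.

Definition Lop (a b : E) : E -> E := fun x => tp a b x.

Definition unit_ball_functional (f : E -> R[i]) : Prop :=
  [/\ (forall u v, f (u + v) = f u + f v),
      (forall (k : R[i]) u, f (k *: u) = k * f u) &
      (forall y, `|f y| <= `|y|)].

(* hermitian operator: numerical range (Lumer) is real *)
Definition hermitian (S : E -> E) : Prop :=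
  forall (x : E) (f : E -> R[i]), `|x| = 1 -> unit_ball_functional f ->
    f x = 1 -> complex.Im (f (S x)) = 0.

(* spectrum of S (in B(E)) is contained in [0, +oo) *)
Definition nonneg_spectrum (S : E -> E) : Prop :=
  forall lam : R[i], ~ (complex.Im lam = 0 /\ 0 <= complex.Re lam) ->
    exists g : E -> E, [/\ continuous g,
       (forall x, g (S x - lam *: x) = x) &
       (forall x, S (g x) - lam *: g x = x)].

Definition is_JBstar_triple : Prop :=
  [/\ (
      (forall a a' b c (k : R[i]), tp (k *: a + a') b c = k *: tp a b c + tp a' b c) /\
      (forall a b c, tp a b c = tp c b a)),
      (forall a b b' c (k : R[i]), tp a (k *: b + b') c = (k^*)%C *: tp a b c + tp a b' c) /\
      continuous (fun p : E * E * E => tp p.1.1 p.1.2 p.2),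
      (forall a b x y z,
        Lop a b (Lop x y z) =
        Lop x y (Lop a b z) + Lop (Lop a b x) y z - Lop x (Lop b a y) z),
      (forall a, hermitian (Lop a a) /\ nonneg_spectrum (Lop a a)) &
      (forall a, `|tp a a a| = `|a| ^+ 3)].

Definition orthogonal (a b : E) : Prop := forall x, tp a b x = 0.

Definition tripotent (e : E) : Prop := tp e e e = e.

Definition tripotents_norm_total : Prop :=
  forall (x : E) (eps : R), 0 < eps ->
    exists s : seq (R[i] * E),
      [/\ (forall i, (i < size s)%N -> tripotent (nth (0, 0) s i).2),
          (forall i j, (i < j)%N -> (j < size s)%N ->
             orthogonal (nth (0, 0) s i).2 (nth (0, 0) s j).2) &
          `|x - \sum_(p <- s) p.1 *: p.2| < (eps%:C)%C].

Definition Qop (e : E) : E -> E := fun x => tp e x e.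
Definition P2 (e : E) : E -> E := fun x => Qop e (Qop e x).
Definition P1 (e : E) : E -> E := fun x => 2%:R *: (Lop e e x - Qop e (Qop e x)).
Definition P0 (e : E) : E -> E :=
  fun x => x - 2%:R *: Lop e e x + Qop e (Qop e x).

Definition Peirce (j : nat) (e : E) : set E :=
  fun x => tp e e x = (j%:R / 2%:R : R[i]) *: x.

Definition Peirce02 (e : E) : set E :=
  fun x => exists x0 x2, [/\ Peirce 0 e x0, Peirce 2 e x2 & x = x0 + x2].

Definition triple_derivation (D : E -> E) : Prop :=
  forall a b c, D (tp a b c) = tp (D a) b c + tp a (D b) c + tp a b (D c).

Definition triple_derivation_on (F : set E) (D : E -> E) : Prop :=
  (forall x, F x -> F (D x)) /\
  (forall a b c, F a -> F b -> F c ->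
     D (tp a b c) = tp (D a) b c + tp a (D b) c + tp a b (D c)).

End JB.

From Pilot Require Import Defs.
From HB Require Import structures.
From mathcomp Require Import all_boot all_order all_algebra.
From mathcomp Require Import complex.
From mathcomp Require Import all_classical all_reals all_analysis.
From mathcomp Require Import ring zify.
Set Implicit Arguments. Unset Strict Implicit. Unset Printing Implicit Defensive.
Import Order.TTheory GRing.Theory Num.Theory ComplexField.
Import numFieldNormedType.Exports.
Local Open Scope ring_scope.

(* For a tripotent e, the identities L(e,e)Q(e) = Q(e) and
   2 L(e,e)^2 = L(e,e) + Q(e)^2 (consequences of the Jordan identity) show
   that every eigenvector of L(e,e) has eigenvalue 0, 1/2 or 1, and that
   P0, P1, P2 are the projections of the Peirce decomposition.  The Peirce
   multiplication rule {E_i, E_j, E_k} <= E_(i-j+k) then implies that P1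
   commutes with triple products whose other two arguments lie in
   E_0(e) + E_2(e); this gives (a) => (b), and projecting the identity in (b)
   onto E_2(e) and E_0(e) gives (b) => (c).

   For (c) => (a) consider the defect
     d(a,b,c) = T{a,b,c} - {Ta,b,c} - {a,Tb,c} - {a,b,Tc},
   which is sesquilinear like the triple product.  Condition (c) forces
   d(u,u,u) = 0 for every tripotent u; sesquilinearity and a polarization
   over the unit scalars 1, -1, i, -i extend this to d(x,x,x) = 0 for every
   finite linear combination x of mutually orthogonal tripotents.  By
   continuity and norm-totality d(x,x,x) = 0 on all of E, and polarization
   once more gives d = 0, i.e. T is a triple derivation. *)

Section LinearCombinations.
Variables (K : pzRingType) (V : lmodType K).

Definition lc n (c : 'I_n -> K) (v : 'I_n -> V) : V := \sum_i c i *: v i.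

Lemma lcD n (c d : 'I_n -> K) (v : 'I_n -> V) :
  lc c v + lc d v = lc (fun i => c i + d i) v.
Proof. by rewrite /lc -big_split; apply: eq_bigr => i _; rewrite scalerDl. Qed.

Lemma lcN n (c : 'I_n -> K) (v : 'I_n -> V) : - lc c v = lc (fun i => - c i) v.
Proof. by rewrite /lc -sumrN; apply: eq_bigr => i _; rewrite scaleNr. Qed.

Lemma lcB n (c d : 'I_n -> K) (v : 'I_n -> V) :
  lc c v - lc d v = lc (fun i => c i - d i) v.
Proof. by rewrite lcN lcD. Qed.

Lemma lcZ n k (c : 'I_n -> K) (v : 'I_n -> V) : k *: lc c v = lc (fun i => k * c i) v.
Proof. by rewrite /lc scaler_sumr; apply: eq_bigr => i _; rewrite scalerA. Qed.

Lemma lcMn n m (c : 'I_n -> K) (v : 'I_n -> V) :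
  lc c v *+ m = lc (fun i => m%:R * c i) v.
Proof. by rewrite -scaler_nat lcZ. Qed.

Lemma lc_ext n (c d : 'I_n -> K) (v : 'I_n -> V) :
  (forall i, c i = d i) -> lc c v = lc d v.
Proof. by move=> h; apply: eq_bigr => i _; rewrite h. Qed.

Lemma lc_atom n (v : 'I_n -> V) (j : 'I_n) :
  v j = lc (fun i => (nat_of_ord i == nat_of_ord j)%:R) v.
Proof.
rewrite /lc (bigD1 j) //= eqxx scale1r big1 ?addr0 // => i /negbTE.
by rewrite -(inj_eq val_inj) => ->; rewrite scale0r.
Qed.

Lemma lc0 n (v : 'I_n -> V) (c : 'I_n -> K) : (forall i, c i = 0) -> lc c v = 0.
Proof. by move=> h; rewrite /lc big1 // => i _; rewrite h scale0r. Qed.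

Lemma lc_comb1 n (v : 'I_n -> V) (g c1 : 'I_n -> K) k1 :
  lc c1 v = 0 -> (forall i, g i = k1 * c1 i) -> lc g v = 0.
Proof. by move=> h1 h; rewrite (lc_ext _ h) -lcZ h1 scaler0. Qed.

Lemma lc_comb2 n (v : 'I_n -> V) (g c1 c2 : 'I_n -> K) k1 k2 :
  lc c1 v = 0 -> lc c2 v = 0 ->
  (forall i, g i = k1 * c1 i + k2 * c2 i) -> lc g v = 0.
Proof. by move=> h1 h2 h; rewrite (lc_ext _ h) -lcD -!lcZ h1 h2 !scaler0 addr0. Qed.

Lemma lc_comb4 n (v : 'I_n -> V) (g c1 c2 c3 c4 : 'I_n -> K) k1 k2 k3 k4 :
  lc c1 v = 0 -> lc c2 v = 0 -> lc c3 v = 0 -> lc c4 v = 0 ->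
  (forall i, g i = k1 * c1 i + k2 * c2 i + k3 * c3 i + k4 * c4 i) -> lc g v = 0.
Proof.
by move=> h1 h2 h3 h4 h; rewrite (lc_ext _ h) -!lcD -!lcZ h1 h2 h3 h4 !scaler0 !addr0.
Qed.

End LinearCombinations.

(* [lin_atoms [:: v0; ...; vn]] rewrites each listed vector (larger terms
   first) as a Kronecker combination of the family (v0, ..., vn). *)
Ltac name_atoms w n l k :=
  lazymatch l with
  | ?a :: ?l' => rewrite -[a]/(w (@Ordinal n k isT)); name_atoms w n l' constr:(S k)
  | _ => idtac
  end.
Ltac list_length l :=
  lazymatch l with
  | _ :: ?l' => let n := list_length l' in constr:(S n)
  | _ => constr:(0%N)
  end.
Ltac lin_atoms l :=
  let w := fresh "w" in let n := list_length l in
  pose w := fun i : 'I_n => nth 0 l i; name_atoms w n l 0%N; rewrite !(lc_atom w).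

(* turn an equation between combinations into "combination = 0" *)
Ltac lin_hyp H :=
  move/eqP: H; rewrite ?(add0r, addr0, lcD, lcB, lcN, lcZ, lcMn) -subr_eq0 ?subr0 ?lcB;
  move/eqP=> H.
Ltac lin_goal :=
  apply/eqP; rewrite ?(add0r, addr0, lcD, lcB, lcN, lcZ, lcMn) -subr_eq0 ?subr0 ?lcB;
  apply/eqP.
(* one scalar goal per coefficient (families of at most eight vectors) *)
Ltac lin_cases := move=> -[[|[|[|[|[|[|[|[|]]]]]]]] ?] //=.
Ltac lin_field := lin_cases; field; rewrite ?pnatr_eq0 //.
Ltac lin_ring := lin_goal; apply: lc0; lin_cases; ring.
Ltac lin_from H := lin_hyp H; lin_goal; refine (lc_comb1 (k1 := 1) H _); lin_field.

Section ComplexUnits.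
Variable R : realType.

Lemma conj_i : (('i%C : R[i])^*)%C = - 'i%C.
Proof. by apply/eqP; rewrite eq_complex /= oppr0 !eqxx. Qed.

Lemma conj_mi : ((- 'i%C : R[i])^*)%C = 'i%C.
Proof. by apply/eqP; rewrite eq_complex /= oppr0 opprK !eqxx. Qed.

Lemma i_neq0 : ('i%C : R[i]) != 0.
Proof.
apply/eqP => h; have := sqr_i R; rewrite h expr0n /= => /eqP.
by rewrite eq_sym oppr_eq0 oner_eq0.
Qed.

Lemma conj_half (j : nat) : ((j%:R / 2%:R : R[i])^*)%C = j%:R / 2%:R.
Proof. by rewrite rmorphM fmorphV !rmorph_nat. Qed.

(* if 2m X + m^* Y + 2|m|^2 Z + m^2 W = 0 for every unimodular scalar m, then
   X = Y = 0: combine the instances m = 1, -1, i, -i *)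
Lemma unit_circle_coeffs (V : lmodType R[i]) (X Y Z W : V) :
  (forall m : R[i], m * (m^*)%C = 1 -> m *: (X *+ 2) + (m^*)%C *: Y
     + (m * (m^*)%C) *: (Z *+ 2) + m ^+ 2 *: W = 0) -> X = 0 /\ Y = 0.
Proof.
move=> key.
have h1 := key 1 ltac:(by rewrite rmorph1 mulr1).
have h2 := key (-1) ltac:(by rewrite rmorphN1 mulrNN mulr1).
have h3 := key 'i%C ltac:(by rewrite conj_i mulrN -expr2 sqr_i opprK).
have h4 := key (- 'i%C) ltac:(by rewrite conj_mi mulNr -expr2 sqr_i opprK).
rewrite rmorph1 in h1; rewrite rmorphN1 in h2; rewrite conj_i in h3.
rewrite conj_mi in h4.
move: h1 h2 h3 h4; lin_atoms [:: X; Y; Z; W] => h1 h2 h3 h4.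
lin_hyp h1; lin_hyp h2; lin_hyp h3; lin_hyp h4.
split; lin_goal.
  apply: (lc_comb4 (k1 := 8%:R^-1) (k2 := - 8%:R^-1) (k3 := (8%:R * 'i%C)^-1)
    (k4 := - (8%:R * 'i%C)^-1) h1 h2 h3 h4).
  by lin_cases; field; rewrite ?pnatr_eq0 ?i_neq0.
apply: (lc_comb4 (k1 := 4%:R^-1) (k2 := - 4%:R^-1) (k3 := - (4%:R * 'i%C)^-1)
  (k4 := (4%:R * 'i%C)^-1) h1 h2 h3 h4).
by lin_cases; field; rewrite ?pnatr_eq0 ?i_neq0.
Qed.

Lemma addxx_eq0 (V : lmodType R[i]) (x : V) : x + x = 0 -> x = 0.
Proof.
move=> h; have /eqP : (2%:R : R[i]) *: x = 0 by rewrite scaler_nat mulr2n.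
by rewrite scaler_eq0 pnatr_eq0 /= => /eqP.
Qed.

End ComplexUnits.

Section Density.
Variables (R : realType) (V W : normedModType R[i]).

(* a continuous map vanishing on a dense set vanishes everywhere (the norm of
   a complex normed space takes values in R[i], hence eps%:C) *)
Lemma dense_zero (q : V -> W) : continuous q ->
  (forall x (eps : R), 0 < eps -> exists a, `|x - a| < (eps%:C)%C /\ q a = 0) ->
  forall x, q x = 0.
Proof.
move=> Hq Hd x; apply/eqP; apply/negPn/negP => nz.
have hp : 0 < `|q x| by rewrite normr_gt0.
have [r r0 hr] := iffLR (nbhs_normP x _) (@cvgr_dist_lt _ _ _ (nbhs x) _ q (q x) (Hq x) _ hp).
have r0c : ((0 : R[i]) < r) := r0.
have r0' : 0 < complex.Re r by move: r0c; rewrite ltcE => /andP[_].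
have rI : complex.Im r = 0 by move: r0c; rewrite ltcE => /andP[/eqP -> _].
have hrr : ((complex.Re r)%:C)%C = r by rewrite [RHS]complexE rI mulr0 addr0.
have [a [ha qa]] := Hd x _ r0'; rewrite hrr in ha.
by have := hr a ha; rewrite /= qa subr0 ltxx.
Qed.

End Density.

Section TripleProduct.
Variables (R : realType) (E : completeNormedModType R[i]) (tp : E -> E -> E -> E).
Hypothesis Hlin : forall a a' b c (k : R[i]),
  tp (k *: a + a') b c = k *: tp a b c + tp a' b c.
Hypothesis Hsym : forall a b c, tp a b c = tp c b a.
Hypothesis Hmid : forall a b b' c (k : R[i]),
  tp a (k *: b + b') c = (k^*)%C *: tp a b c + tp a b' c.
Hypothesis Hjor : forall a b x y z,
  tp a b (tp x y z) = tp x y (tp a b z) + tp (tp a b x) y z - tp x (tp b a y) z.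
Hypothesis Hnorm : forall a, `|tp a a a| = `|a| ^+ 3.

Lemma tp0l b c : tp 0 b c = 0.
Proof.
have h := Hlin 0 0 b c 1; rewrite !scale1r !addr0 in h.
by apply: (addrI (tp 0 b c)); rewrite addr0 -h.
Qed.
Lemma tpDl a a' b c : tp (a + a') b c = tp a b c + tp a' b c.
Proof. by have := Hlin a a' b c 1; rewrite !scale1r. Qed.
Lemma tpZl k a b c : tp (k *: a) b c = k *: tp a b c.
Proof. by have := Hlin a 0 b c k; rewrite !addr0 tp0l addr0. Qed.
Lemma tpNl a b c : tp (- a) b c = - tp a b c.
Proof. by rewrite -scaleN1r tpZl scaleN1r. Qed.
Lemma tpBl a a' b c : tp (a - a') b c = tp a b c - tp a' b c.
Proof. by rewrite tpDl tpNl. Qed.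

Lemma tp0r a b : tp a b 0 = 0.
Proof. by rewrite Hsym tp0l. Qed.
Lemma tpDr a b c c' : tp a b (c + c') = tp a b c + tp a b c'.
Proof. by rewrite Hsym tpDl !(Hsym _ b a). Qed.
Lemma tpZr k a b c : tp a b (k *: c) = k *: tp a b c.
Proof. by rewrite Hsym tpZl Hsym. Qed.
Lemma tpBr a b c c' : tp a b (c - c') = tp a b c - tp a b c'.
Proof. by rewrite Hsym tpBl !(Hsym _ b a). Qed.

Lemma tp0m a c : tp a 0 c = 0.
Proof.
have h := Hmid a 0 0 c 1; rewrite conjc1 !scale1r !addr0 in h.
by apply: (addrI (tp a 0 c)); rewrite addr0 -h.
Qed.
Lemma tpDm a b b' c : tp a (b + b') c = tp a b c + tp a b' c.
Proof. by have := Hmid a b b' c 1; rewrite !scale1r conjc1 scale1r. Qed.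
Lemma tpZm k a b c : tp a (k *: b) c = (k^*)%C *: tp a b c.
Proof. by have := Hmid a b 0 c k; rewrite !addr0 tp0m addr0. Qed.
Lemma tpBm a b b' c : tp a (b - b') c = tp a b c - tp a b' c.
Proof. by rewrite tpDm -scaleN1r tpZm rmorphN1 scaleN1r. Qed.

(* Orthogonality is symmetric: if L(e,f) = 0 then {x, L(f,e)y, z} = 0 for
   all x, z by the Jordan identity, so w = L(f,e)y has {w,w,w} = 0, hence
   w = 0 by the norm identity. *)
Lemma orthogonal_sym e f : Defs.orthogonal tp e f -> Defs.orthogonal tp f e.
Proof.
move=> h y; set w := tp f e y.
have hw x z : tp x w z = 0.
  have := Hjor e f x y z; rewrite !h tp0l tp0r !add0r.
  by move/esym/eqP; rewrite oppr_eq0 => /eqP.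
have := Hnorm w; rewrite hw normr0 => /esym/eqP.
by rewrite expf_eq0 /= normr_eq0 => /eqP.
Qed.

Lemma Peirce0_0 e i : Peirce tp i e 0.
Proof. by rewrite /Peirce tp0r scaler0. Qed.

Section Projections.
Variable e : E.

Lemma P_sum x : P0 tp e x + P1 tp e x + P2 tp e x = x.
Proof.
rewrite /P0 /P1 /P2 /Qop /Lop.
by lin_atoms [:: tp e (tp e x e) e; tp e e x; x]; lin_ring.
Qed.

Lemma P02_compl x : P0 tp e x + P2 tp e x = x - P1 tp e x.
Proof.
have := P_sum x; lin_atoms [:: P0 tp e x; P1 tp e x; P2 tp e x; x] => h.
by lin_from h.
Qed.

Lemma P0D x y : P0 tp e (x + y) = P0 tp e x + P0 tp e y.
Proof.
rewrite /P0 /Qop /Lop !tpDm tpDr.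
by lin_atoms [:: tp e (tp e x e) e; tp e (tp e y e) e; tp e e x; tp e e y; x; y]; lin_ring.
Qed.
Lemma P1D x y : P1 tp e (x + y) = P1 tp e x + P1 tp e y.
Proof.
rewrite /P1 /Qop /Lop !tpDm tpDr.
by lin_atoms [:: tp e (tp e x e) e; tp e (tp e y e) e; tp e e x; tp e e y]; lin_ring.
Qed.
Lemma P2D x y : P2 tp e (x + y) = P2 tp e x + P2 tp e y.
Proof. by rewrite /P2 /Qop !tpDm. Qed.

End Projections.

Section Tripotent.
Variable e : E.
Hypothesis He : tripotent tp e.

Lemma LQ v : tp e e (tp e v e) = tp e v e.
Proof.
have J1 := Hjor e v e e e; rewrite He (Hsym (tp e v e) e e) (Hsym v e e) in J1.
have J2 := Hjor e e e v e; rewrite He in J2.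
move: J1 J2; lin_atoms [:: tp e e (tp e v e); tp e (tp e e v) e; tp e v e] => J1 J2.
lin_hyp J1; lin_hyp J2; lin_goal.
by refine (lc_comb2 (k1 := - 3%:R^-1) (k2 := 3%:R^-1) J1 J2 _); lin_field.
Qed.

Lemma LL v : tp e e (tp e e v) + tp e e (tp e e v) = tp e e v + tp e (tp e v e) e.
Proof.
have J := esym (Hjor v e e e e); rewrite He (Hsym v e e) (Hsym (tp e e v) e e) in J.
move: J; lin_atoms [:: tp e e (tp e e v); tp e (tp e v e) e; tp e e v] => J.
by lin_from J.
Qed.

Lemma QQQ v : tp e (tp e (tp e v e) e) e = tp e v e.
Proof. by have := LL (tp e v e); rewrite !LQ => /addrI. Qed.

Lemma tripotent_Peirce2 : Peirce tp 2 e e.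
Proof. by rewrite /Peirce He divff ?pnatr_eq0 // scale1r. Qed.

Section Eigenvector.
Variables (w : E) (c : R[i]).
Hypothesis Hw : tp e e w = c *: w.

Lemma QQ_eig : tp e (tp e w e) e = (2%:R * c ^+ 2 - c) *: w.
Proof.
have := esym (LL w); rewrite !Hw !tpZr Hw; lin_atoms [:: tp e (tp e w e) e; w] => h.
by lin_from h.
Qed.

Lemma eig_poly : (c * (2%:R * c - 1) * (c - 1)) *: w = 0.
Proof.
have := LQ (tp e w e); rewrite QQ_eig tpZr Hw; lin_atoms [:: w] => h.
by lin_from h.
Qed.

Lemma eig_zero : c * (2%:R * c - 1) * (c - 1) != 0 -> w = 0.
Proof. by move=> nz; have /eqP := eig_poly; rewrite scaler_eq0 (negbTE nz) => /eqP. Qed.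

Lemma P0_eig : P0 tp e w = (1 - 3%:R * c + 2%:R * c ^+ 2) *: w.
Proof. by rewrite /P0 /Qop /Lop QQ_eig Hw; lin_atoms [:: w]; lin_ring. Qed.
Lemma P1_eig : P1 tp e w = (4%:R * c - 4%:R * c ^+ 2) *: w.
Proof. by rewrite /P1 /Qop /Lop QQ_eig Hw; lin_atoms [:: w]; lin_ring. Qed.
Lemma P2_eig : P2 tp e w = (2%:R * c ^+ 2 - c) *: w.
Proof. exact: QQ_eig. Qed.

End Eigenvector.

Lemma P2_Peirce x : Peirce tp 2 e (P2 tp e x).
Proof. by rewrite /Peirce /P2 /Qop LQ divff ?pnatr_eq0 // scale1r. Qed.

Lemma P0_Peirce x : Peirce tp 0 e (P0 tp e x).
Proof.
rewrite /Peirce /P0 /Qop /Lop mul0r scale0r tpDr tpBr tpZr LQ.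
have := esym (LL x); lin_atoms [:: tp e e (tp e e x); tp e (tp e x e) e; tp e e x] => h.
by lin_from h.
Qed.

Lemma P1_Peirce x : Peirce tp 1 e (P1 tp e x).
Proof.
rewrite /Peirce /P1 /Qop /Lop tpZr tpBr LQ scalerA.
have := LL x; lin_atoms [:: tp e e (tp e e x); tp e (tp e x e) e; tp e e x] => h.
by lin_from h.
Qed.


(* every element is a sum of Peirce components, so an additive property
   holding on each Peirce space holds everywhere *)
Lemma Peirce_ind (Q : E -> Prop) :
  (forall x y, Q x -> Q y -> Q (x + y)) ->
  (forall i x, (i <= 2)%N -> Peirce tp i e x -> Q x) -> forall x, Q x.
Proof.
move=> QD QP x.
have Q0 := QP 0%N _ isT (P0_Peirce x); have Q1 := QP 1%N _ isT (P1_Peirce x).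
by have := QD _ _ (QD _ _ Q0 Q1) (QP 2%N _ isT (P2_Peirce x)); rewrite P_sum.
Qed.

(* Peirce multiplication rule: {E_i, E_j, E_k} lies in the eigenspace of
   L(e,e) for (i - j + k)/2, so it vanishes unless 0 <= i - j + k <= 2 *)
Lemma Peirce_tp i j k x y z :
  Peirce tp i e x -> Peirce tp j e y -> Peirce tp k e z ->
  tp e e (tp x y z) = (((i + k)%:R - j%:R) / 2%:R) *: tp x y z.
Proof.
rewrite /Peirce => hx hy hz.
have := Hjor e e x y z; rewrite hz tpZr hx tpZl hy tpZm conj_half.
lin_atoms [:: tp e e (tp x y z); tp x y z] => h; lin_hyp h; lin_goal.
by refine (lc_comb1 (k1 := 1) h _); lin_cases; rewrite natrD; field; rewrite ?pnatr_eq0.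
Qed.

Lemma Peirce_tp_cases i j k x y z :
  Peirce tp i e x -> Peirce tp j e y -> Peirce tp k e z ->
  tp x y z = 0 \/
  [/\ (j <= i + k)%N, (i + k - j <= 2)%N & Peirce tp (i + k - j) e (tp x y z)].
Proof.
move=> hx hy hz; have hP := Peirce_tp hx hy hz.
have [|hout] := boolP ((j <= i + k) && (i + k - j <= 2))%N.
  by case/andP=> h1 h2; right; split => //; rewrite /Peirce hP natrB.
left; apply: (eig_zero hP); set c := _ / _.
have -> : c * (2%:R * c - 1) * (c - 1) =
   ((i + k)%:R - j%:R) * ((i + k)%:R - (j + 1)%:R) * ((i + k)%:R - (j + 2)%:R) / 4%:R.
  by rewrite /c !natrD; field; rewrite ?pnatr_eq0.
rewrite !mulf_neq0 ?invr_eq0 ?pnatr_eq0 // subr_eq0 eqr_nat; apply/negP => /eqP; lia.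
Qed.

Lemma Peirce_proj_tp (P : E -> E) (f : nat -> bool) i j k x y z :
  (forall m v, (m <= 2)%N -> Peirce tp m e v -> P v = (f m)%:R *: v) ->
  Peirce tp i e x -> Peirce tp j e y -> Peirce tp k e z ->
  P (tp x y z) = (f (i + k - j)%N)%:R *: tp x y z.
Proof.
move=> hP hx hy hz; case: (Peirce_tp_cases hx hy hz) => [->|[_ h2 h]].
  by rewrite (hP 0%N 0 isT (Peirce0_0 e 0)) !scaler0.
exact: hP h2 h.
Qed.

Lemma P0_on i x : (i <= 2)%N -> Peirce tp i e x -> P0 tp e x = (i == 0%N)%:R *: x.
Proof.
move=> hi hx; rewrite (P0_eig hx); lin_atoms [:: x]; lin_goal; apply: lc0.
by case: i hi {hx} => [|[|[|]]] // _; lin_field.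
Qed.
Lemma P1_on i x : (i <= 2)%N -> Peirce tp i e x -> P1 tp e x = (odd i)%:R *: x.
Proof.
move=> hi hx; rewrite (P1_eig hx); lin_atoms [:: x]; lin_goal; apply: lc0.
by case: i hi {hx} => [|[|[|]]] // _; lin_field.
Qed.
Lemma P2_on i x : (i <= 2)%N -> Peirce tp i e x -> P2 tp e x = (i == 2%N)%:R *: x.
Proof.
move=> hi hx; rewrite (P2_eig hx); lin_atoms [:: x]; lin_goal; apply: lc0.
by case: i hi {hx} => [|[|[|]]] // _; lin_field.
Qed.


(* P1 acts on {E_i, E_j, E_k} by the parity of i + j + k; the truncated
   difference i + k - j is harmless since the product vanishes when j > i + k *)
Lemma P1_tp_parity i j k x y z :
  Peirce tp i e x -> Peirce tp j e y -> Peirce tp k e z ->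
  P1 tp e (tp x y z) = (odd (i + j + k))%:R *: tp x y z.
Proof.
move=> hx hy hz; case: (Peirce_tp_cases hx hy hz) => [->|[hj h2 h]].
  by rewrite (P1_on (i := 0%N) isT (Peirce0_0 e _)) !scaler0.
rewrite (P1_on h2 h); have -> : (i + j + k = (i + k - j) + (j + j))%N by lia.
by rewrite oddD addnn odd_double addbF.
Qed.

Lemma P1_tp_left w y z : Peirce02 tp e y -> Peirce02 tp e z ->
  P1 tp e (tp w y z) = tp (P1 tp e w) y z.
Proof.
case=> y0 [y2 [hy0 hy2 ->]]; case=> z0 [z2 [hz0 hz2 ->]].
elim/Peirce_ind: w => [w w' IHw IHw' | i w hi hw].
  by rewrite !tpDl P1D IHw IHw' P1D !tpDl.
rewrite (P1_on hi hw) tpZl !tpDm !tpDr !P1D !scalerDr.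
rewrite (P1_tp_parity hw hy0 hz0) (P1_tp_parity hw hy0 hz2).
rewrite (P1_tp_parity hw hy2 hz0) (P1_tp_parity hw hy2 hz2).
by rewrite !oddD /= !addbF.
Qed.

Lemma P1_tp_mid x w z : Peirce02 tp e x -> Peirce02 tp e z ->
  P1 tp e (tp x w z) = tp x (P1 tp e w) z.
Proof.
case=> x0 [x2 [hx0 hx2 ->]]; case=> z0 [z2 [hz0 hz2 ->]].
elim/Peirce_ind: w => [w w' IHw IHw' | i w hi hw].
  by rewrite !tpDm P1D IHw IHw' P1D !tpDm.
rewrite (P1_on hi hw) tpZm rmorph_nat !tpDl !tpDr !P1D !scalerDr.
rewrite (P1_tp_parity hx0 hw hz0) (P1_tp_parity hx0 hw hz2).
rewrite (P1_tp_parity hx2 hw hz0) (P1_tp_parity hx2 hw hz2).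
by rewrite !oddD /= !addbF.
Qed.

Lemma P1_tp_right x y w : Peirce02 tp e x -> Peirce02 tp e y ->
  P1 tp e (tp x y w) = tp x y (P1 tp e w).
Proof. by move=> hx hy; rewrite !(Hsym x y) P1_tp_left. Qed.


End Tripotent.

Lemma Peirce02_of2 e x : Peirce tp 2 e x -> Peirce02 tp e x.
Proof. by move=> hx; exists 0, x; split; rewrite ?add0r //; exact: Peirce0_0. Qed.

Lemma orth_sum_tripotent e f (m : R[i]) : tripotent tp e -> tripotent tp f ->
  Defs.orthogonal tp e f -> tp (e + m *: f) (e + m *: f) (e + m *: f) = e + (m * (m^*)%C * m) *: f.
Proof.
move=> He Hf hef; have hfe := orthogonal_sym hef.
rewrite !tpDl !tpDm !tpDr !tpZl !tpZm !tpZr (Hsym e e f) (Hsym f f e) !hef !hfe He Hf.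
by rewrite !scaler0 ?addr0 ?add0r; lin_atoms [:: e; f]; lin_ring.
Qed.

Variable T : {linear E -> E}.

Section Compression.
Variable e : E.
Hypothesis He : tripotent tp e.

(* (a) => (b): since P1 commutes with products of elements of E_0 + E_2,
   the compression (P0 + P2) T = T - P1 T inherits the derivation identity *)
Lemma derivation_compress02 : triple_derivation tp T ->
  triple_derivation_on tp (Peirce02 tp e) (fun x => P0 tp e (T x) + P2 tp e (T x)).
Proof.
move=> HT; split.
  move=> x _; exists (P0 tp e (T x)), (P2 tp e (T x)).
  by split; [exact: P0_Peirce | exact: P2_Peirce |].
move=> a b c ha hb hc; rewrite !P02_compl HT !P1D.
rewrite (P1_tp_left He _ hb hc) (P1_tp_mid He _ ha hc) (P1_tp_right He _ ha hb).
rewrite tpBl tpBm tpBr.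
lin_atoms [:: tp (T a) b c; tp a (T b) c; tp a b (T c); tp (P1 tp e (T a)) b c;
  tp a (P1 tp e (T b)) c; tp a b (P1 tp e (T c))].
by lin_ring.
Qed.

(* (b) => (c), first half: project the identity of (b) for a, b, c in
   E_2(e) onto E_2(e); the Peirce components of T a, T b, T c, T{a,b,c} are
   abstracted, since P0 and P2 unfold to sums *)
Lemma compress02_compress2 :
  triple_derivation_on tp (Peirce02 tp e) (fun x => P0 tp e (T x) + P2 tp e (T x)) ->
  triple_derivation_on tp (Peirce tp 2 e) (fun x => P2 tp e (T x)).
Proof.
move=> [_ HD]; have hP2 := P2_on He.
have h0 := P0_Peirce He; have h2 := P2_Peirce He.
split=> [x _|a b c ha hb hc]; first exact: h2.
have := HD a b c (Peirce02_of2 ha) (Peirce02_of2 hb) (Peirce02_of2 hc).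
move: (h0 (T a)) (h2 (T a)) (h0 (T b)) (h2 (T b)) (h0 (T c)) (h2 (T c))
  (h0 (T (tp a b c))) (h2 (T (tp a b c))).
move: (P0 tp e (T a)) (P2 tp e (T a)) (P0 tp e (T b)) (P2 tp e (T b))
  (P0 tp e (T c)) (P2 tp e (T c)) (P0 tp e (T (tp a b c))) (P2 tp e (T (tp a b c)))
  => A0 A2 B0 B2 C0 C2 X0 X2 hA0 hA2 hB0 hB2 hC0 hC2 hX0 hX2.
move/(congr1 (P2 tp e)); rewrite !tpDl !tpDm !tpDr !P2D.
rewrite (hP2 0%N _ isT hX0) (hP2 2%N _ isT hX2).
rewrite (Peirce_proj_tp He hP2 hA0 hb hc) (Peirce_proj_tp He hP2 hA2 hb hc).
rewrite (Peirce_proj_tp He hP2 ha hB0 hc) (Peirce_proj_tp He hP2 ha hB2 hc).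
rewrite (Peirce_proj_tp He hP2 ha hb hC0) (Peirce_proj_tp He hP2 ha hb hC2) /=.
by rewrite ?mulr0n ?mulr1n ?scale0r ?scale1r ?add0r ?addr0.
Qed.

(* (b) => (c), second half: projecting the identity of (b) for (e, e, e)
   onto E_0(e) gives P0 T e = 2 L(e,e) P0 T e = 0 *)
Lemma compress02_P0_vanish :
  triple_derivation_on tp (Peirce02 tp e) (fun x => P0 tp e (T x) + P2 tp e (T x)) ->
  P0 tp e (T e) = 0.
Proof.
move=> [_ HD]; have hP0 := P0_on He; have he := tripotent_Peirce2 He.
have := HD e e e (Peirce02_of2 he) (Peirce02_of2 he) (Peirce02_of2 he).
rewrite He; move: (P0_Peirce He (T e)) (P2_Peirce He (T e)).
move: (P0 tp e (T e)) (P2 tp e (T e)) => A0 A2 hA0 hA2.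
move/(congr1 (P0 tp e)); rewrite !tpDl !tpDm !tpDr !P0D.
rewrite (hP0 0%N _ isT hA0) (hP0 2%N _ isT hA2).
rewrite (Peirce_proj_tp He hP0 hA0 he he) (Peirce_proj_tp He hP0 hA2 he he).
rewrite (Peirce_proj_tp He hP0 he hA0 he) (Peirce_proj_tp He hP0 he hA2 he).
rewrite (Peirce_proj_tp He hP0 he he hA0) (Peirce_proj_tp He hP0 he he hA2) /=.
rewrite ?mulr0n ?mulr1n ?scale0r ?scale1r ?add0r ?addr0 => ->.
have := hA0; rewrite /Peirce mul0r scale0r => hA0e.
by rewrite (Hsym _ e e) hA0e addr0.
Qed.

End Compression.

Definition defect a b c := T (tp a b c) - tp (T a) b c - tp a (T b) c - tp a b (T c).

Lemma defectDl a a' b c : defect (a + a') b c = defect a b c + defect a' b c.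
Proof.
rewrite /defect !(linearD T) !tpDl !(linearD T).
lin_atoms [:: T (tp a b c); T (tp a' b c); tp (T a) b c; tp (T a') b c;
  tp a (T b) c; tp a' (T b) c; tp a b (T c); tp a' b (T c)].
by lin_ring.
Qed.
Lemma defectZl k a b c : defect (k *: a) b c = k *: defect a b c.
Proof.
rewrite /defect !(linearZZ T) !tpZl !(linearZZ T) /=.
by lin_atoms [:: T (tp a b c); tp (T a) b c; tp a (T b) c; tp a b (T c)]; lin_ring.
Qed.
Lemma defectDm a b b' c : defect a (b + b') c = defect a b c + defect a b' c.
Proof.
rewrite /defect !(linearD T) !tpDm !(linearD T).
lin_atoms [:: T (tp a b c); T (tp a b' c); tp (T a) b c; tp (T a) b' c;
  tp a (T b) c; tp a (T b') c; tp a b (T c); tp a b' (T c)].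
by lin_ring.
Qed.
Lemma defectZm k a b c : defect a (k *: b) c = (k^*)%C *: defect a b c.
Proof.
rewrite /defect !(linearZZ T) !tpZm /= !(linearZZ T) /=.
by lin_atoms [:: T (tp a b c); tp (T a) b c; tp a (T b) c; tp a b (T c)]; lin_ring.
Qed.
Lemma defect_sym a b c : defect a b c = defect c b a.
Proof.
rewrite /defect (Hsym a b c) (Hsym (T a) b c) (Hsym a (T b) c) (Hsym a b (T c)).
by lin_atoms [:: T (tp c b a); tp c b (T a); tp c (T b) a; tp (T c) b a]; lin_ring.
Qed.
Lemma defectDr a b c c' : defect a b (c + c') = defect a b c + defect a b c'.
Proof. by rewrite defect_sym defectDl !(defect_sym _ b a). Qed.
Lemma defectZr k a b c : defect a b (k *: c) = k *: defect a b c.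
Proof. by rewrite defect_sym defectZl defect_sym. Qed.
Lemma defect0l b c : defect 0 b c = 0.
Proof. by have := defectZl 0 0 b c; rewrite !scale0r. Qed.
Lemma defect0m a c : defect a 0 c = 0.
Proof. by have := defectZm 0 a 0 c; rewrite scale0r rmorph0 scale0r. Qed.
Lemma defect0r a b : defect a b 0 = 0.
Proof. by rewrite defect_sym defect0l. Qed.

Lemma defect_suml I (r : seq I) (P : pred I) (F : I -> E) b c :
  defect (\sum_(i <- r | P i) F i) b c = \sum_(i <- r | P i) defect (F i) b c.
Proof.
exact: (big_morph (fun x => defect x b c) (fun x y => defectDl x y b c) (defect0l b c)).
Qed.
Lemma defect_summ I (r : seq I) (P : pred I) (F : I -> E) a c :
  defect a (\sum_(i <- r | P i) F i) c = \sum_(i <- r | P i) defect a (F i) c.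
Proof.
exact: (big_morph (fun x => defect a x c) (fun x y => defectDm a x y c) (defect0m a c)).
Qed.
Lemma defect_sumr I (r : seq I) (P : pred I) (F : I -> E) a b :
  defect a b (\sum_(i <- r | P i) F i) = \sum_(i <- r | P i) defect a b (F i).
Proof. exact: (big_morph (defect a b) (defectDr a b) (defect0r a b)). Qed.

Lemma defect_expand a b (m : R[i]) :
  defect (a + m *: b) (a + m *: b) (a + m *: b) =
  defect a a a + m *: (defect a a b *+ 2) + (m^*)%C *: defect a b a
  + (m * (m^*)%C) *: (defect a b b *+ 2) + (m ^+ 2) *: defect b a b
  + (m * (m^*)%C * m) *: defect b b b.
Proof.
rewrite !defectDl !defectDm !defectDr !defectZl !defectZm !defectZr.
rewrite (defect_sym b a a) (defect_sym b b a).
lin_atoms [:: defect a a a; defect a a b; defect a b a; defect a b b;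
  defect b a b; defect b b b].
by lin_ring.
Qed.

(* a defect vanishing on the diagonal vanishes identically: expanding along
   a + m b over unimodular m gives d(a,b,a) = 0, and then
   0 = d(a+c, b, a+c) = 2 d(a,b,c) *)
Lemma defect_polarization : (forall x, defect x x x = 0) -> forall a b c, defect a b c = 0.
Proof.
move=> Hz a b c.
have Hm a' b' : defect a' b' a' = 0.
  apply: (proj2 (unit_circle_coeffs (X := defect a' a' b') (Z := defect a' b' b')
    (W := defect b' a' b') _)).
  by move=> m _; have := Hz (a' + m *: b'); rewrite defect_expand !Hz scaler0 addr0 add0r.
have := Hm (a + c) b; rewrite defectDl !defectDr !Hm add0r addr0 (defect_sym c b a).
exact: addxx_eq0.
Qed.

(* (c) at a tripotent u: the derivation identity of P2 T at (u, u, u) and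
   P0 T u = 0 combine, via Q(u)^3 = Q(u), to d(u, u, u) = 0 *)
Lemma compress2_defect u : tripotent tp u ->
  triple_derivation_on tp (Peirce tp 2 u) (fun x => P2 tp u (T x)) /\ P0 tp u (T u) = 0 ->
  defect u u u = 0.
Proof.
move=> Hu [[_ HD] H0].
have hu := tripotent_Peirce2 Hu.
have h1 := HD u u u hu hu hu; rewrite Hu /P2 /Qop in h1.
rewrite (Hsym (tp u (tp u (T u) u) u) u u) (LQ Hu) in h1.
move: H0; rewrite /P0 /Qop /Lop => H0.
rewrite /defect Hu (Hsym (T u) u u) -(QQQ Hu (T u)).
move: h1 H0.
lin_atoms [:: tp u (tp u (tp u (T u) u) u) u; tp u (tp u (T u) u) u; tp u u (T u); T u].
move=> h1 H0; lin_hyp h1; lin_hyp H0; lin_goal.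
by refine (lc_comb2 (k1 := 1) (k2 := 1) H0 h1 _); lin_field.
Qed.

Section OrthogonalTripotents.
Hypothesis Hq : forall u, tripotent tp u -> defect u u u = 0.

(* for orthogonal tripotents e, f the elements e + m f with |m| = 1 are
   tripotents; expanding d along them kills d(e,e,f) and d(e,f,e) *)
Lemma orth_pair_defect e f : tripotent tp e -> tripotent tp f ->
  Defs.orthogonal tp e f -> defect e e f = 0 /\ defect e f e = 0.
Proof.
move=> He Hf hef; apply: (unit_circle_coeffs (Z := defect e f f) (W := defect f e f)).
move=> m hm; have Hu : tripotent tp (e + m *: f).
  by rewrite /tripotent orth_sum_tripotent // hm mul1r.
by have := Hq Hu; rewrite defect_expand (Hq He) (Hq Hf) scaler0 addr0 add0r.
Qed.

(* for three mutually orthogonal tripotents, apply the pair case to the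
   tripotent e + g and f *)
Lemma orth_triple_defect e f g : tripotent tp e -> tripotent tp f -> tripotent tp g ->
  Defs.orthogonal tp e f -> Defs.orthogonal tp e g -> Defs.orthogonal tp f g ->
  defect e f g = 0.
Proof.
move=> He Hf Hg hef heg hfg.
have Hu : tripotent tp (e + g).
  by have := orth_sum_tripotent 1 He Hg heg; rewrite rmorph1 !mulr1 !scale1r.
have huf : Defs.orthogonal tp (e + g) f.
  by move=> x; rewrite tpDl hef (orthogonal_sym hfg) addr0.
have [_] := orth_pair_defect Hu Hf huf.
rewrite defectDl !defectDr (orth_pair_defect He Hf hef).2.
rewrite (orth_pair_defect Hg Hf (orthogonal_sym hfg)).2 (defect_sym g f e) add0r addr0.
exact: (@addxx_eq0 R E).
Qed.

Section Family.
Variable s : seq (R[i] * E).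
Let v i := (nth (0, 0) s i).2.
Hypothesis Htrip : forall i, (i < size s)%N -> tripotent tp (v i).
Hypothesis Horth : forall i j, (i < j)%N -> (j < size s)%N -> Defs.orthogonal tp (v i) (v j).

Lemma family_orth i j : (i < size s)%N -> (j < size s)%N -> i != j ->
  Defs.orthogonal tp (v i) (v j).
Proof.
move=> hi hj; case: (ltngtP i j) => [hij|hji|->] // _; first exact: Horth.
exact/orthogonal_sym/Horth.
Qed.

Lemma family_defect i j k : (i < size s)%N -> (j < size s)%N -> (k < size s)%N ->
  defect (v i) (v j) (v k) = 0.
Proof.
move=> hi hj hk; have Ti := Htrip hi; have Tj := Htrip hj; have Tk := Htrip hk.
have [eij|nij] := eqVneq i j.
  rewrite -eij; have [eik|nik] := eqVneq i k; first by rewrite -eik; exact: Hq.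
  exact: (orth_pair_defect Ti Tk (family_orth hi hk nik)).1.
have [eik|nik] := eqVneq i k.
  by rewrite -eik; exact: (orth_pair_defect Ti Tj (family_orth hi hj nij)).2.
have [ejk|njk] := eqVneq j k.
  rewrite -ejk defect_sym.
  by apply: (orth_pair_defect Tj Ti (family_orth hj hi _)).1; rewrite eq_sym.
by apply: orth_triple_defect => //; exact: family_orth.
Qed.

Lemma family_combination_defect :
  let x := \sum_(p <- s) p.1 *: p.2 in defect x x x = 0.
Proof.
rewrite /= (big_nth (0, 0)) defect_suml big1_seq // => i /andP[_].
rewrite mem_index_iota => /andP[_ hi]; rewrite defectZl defect_summ big1_seq ?scaler0 //.
move=> j /andP[_]; rewrite mem_index_iota => /andP[_ hj].
rewrite defectZm defect_sumr big1_seq ?scaler0 // => k /andP[_].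
by rewrite mem_index_iota => /andP[_ hk]; rewrite defectZr family_defect ?scaler0.
Qed.

End Family.
End OrthogonalTripotents.

Section Continuity.
Hypothesis Hc : continuous (fun p : E * E * E => tp p.1.1 p.1.2 p.2).
Hypothesis HT : continuous T.

Lemma tp_continuous_comp (f g h : E -> E) x : {for x, continuous f} ->
  {for x, continuous g} -> {for x, continuous h} ->
  {for x, continuous (fun a => tp (f a) (g a) (h a))}.
Proof.
move=> hf hg hh.
apply: (@continuous_cvg _ _ _ (nbhs x) _ (fun a => ((f a, g a), h a))
  (fun p : E * E * E => tp p.1.1 p.1.2 p.2) ((f x, g x), h x)); first exact: Hc.
exact: cvg_pair (cvg_pair hf hg) hh.
Qed.

Lemma defect_diag_continuous : continuous (fun x => defect x x x).
Proof.
move=> x; have hid : {for x, continuous (fun a : E => a)} by exact: cvg_id.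
apply: cvgB; [apply: cvgB; [apply: cvgB|]|].
- apply: (@continuous_cvg _ _ _ (nbhs x) _ (fun a => tp a a a) T); first exact: HT.
  exact: tp_continuous_comp.
- by apply: tp_continuous_comp; [exact: HT | exact: hid | exact: hid].
- by apply: tp_continuous_comp; [exact: hid | exact: HT | exact: hid].
- by apply: tp_continuous_comp; [exact: hid | exact: hid | exact: HT].
Qed.

End Continuity.

(* (c) => (a): d(x,x,x) vanishes at tripotents, hence on combinations of
   orthogonal tripotents, hence everywhere by density; polarize *)
Lemma compress2_derivation :
  continuous (fun p : E * E * E => tp p.1.1 p.1.2 p.2) -> continuous T ->
  tripotents_norm_total tp ->
  (forall e, tripotent tp e ->
     triple_derivation_on tp (Peirce tp 2 e) (fun x => P2 tp e (T x)) /\ P0 tp e (T e) = 0) ->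
  triple_derivation tp T.
Proof.
move=> Hc HT Htot hc.
have Hq u : tripotent tp u -> defect u u u = 0 by move=> Hu; exact: compress2_defect (hc u Hu).
have Hz x : defect x x x = 0.
  apply: (dense_zero (defect_diag_continuous Hc HT)) => {}x eps eps0.
  have [s [Ht Ho Hx]] := Htot x eps eps0.
  by exists (\sum_(p <- s) p.1 *: p.2); split => //; exact: (family_combination_defect Hq Ht Ho).
move=> a b c; have := defect_polarization Hz a b c; rewrite /defect.
lin_atoms [:: T (tp a b c); tp (T a) b c; tp a (T b) c; tp a b (T c)] => h.
by lin_from h.
Qed.

Lemma derivation_Peirce_characterization :
  continuous (fun p : E * E * E => tp p.1.1 p.1.2 p.2) -> continuous T ->
  tripotents_norm_total tp ->
  (triple_derivation tp T <->
     (forall e : E, tripotent tp e ->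
        triple_derivation_on tp (Peirce02 tp e) (fun x => P0 tp e (T x) + P2 tp e (T x))))
  /\
  (triple_derivation tp T <->
     (forall e : E, tripotent tp e ->
        triple_derivation_on tp (Peirce tp 2 e) (fun x => P2 tp e (T x))
        /\ P0 tp e (T e) = 0)).
Proof.
move=> Hc HT Htot; split; split.
- by move=> HD e He; exact: derivation_compress02.
- move=> hb; apply: compress2_derivation => // e He.
  by split; [exact/compress02_compress2/hb | exact/compress02_P0_vanish/hb].
- move=> HD e He; have hb := derivation_compress02 He HD.
  by split; [exact: compress02_compress2 | exact: compress02_P0_vanish].
- exact: compress2_derivation.
Qed.

End TripleProduct.

Theorem mainTheorem3 (R : realType) (E : completeNormedModType R[i])
  (tp : E -> E -> E -> E) (HJB : is_JBstar_triple tp)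
  (Htot : tripotents_norm_total tp)
  (T : {linear E -> E}) (HT : continuous T) :
  (triple_derivation tp T <->
     (forall e : E, tripotent tp e ->
        triple_derivation_on tp (Peirce02 tp e) (fun x => P0 tp e (T x) + P2 tp e (T x))))
  /\
  (triple_derivation tp T <->
     (forall e : E, tripotent tp e ->
        triple_derivation_on tp (Peirce tp 2 e) (fun x => P2 tp e (T x))
        /\ P0 tp e (T e) = 0)).
Proof.
case: HJB => [[Hlin Hsym] [Hmid Hcont] Hjor _ Hnorm].
exact: (derivation_Peirce_characterization Hlin Hsym Hmid Hjor Hnorm Hcont HT Htot).
Qed.
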